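(* Let $X_1,\dots,X_n$ be independent random variables with values in $\mathbb{Z}_+=\{0,1,2,\dots\}$, and suppose that for each $i$ the probability generating function $M_{X_i}(z)=\mathbb{E}(z^{X_i})$ satisfies $$G_{X_i}(z):=\frac{M_{X_i}'(z)}{M_{X_i}(z)}=\sum_{m=0}^{\infty}a_{i,m+1}z^m .$$ Let $Y=\sum_{i=1}^n X_i$ and $\mu=\sum_{i=1}^n\sum_{m=0}^\infty a_{i,m+1}$ (the mean of $Y$). Let $\alpha>0$ and $p\in(0,1)$, $q=1-p$, satisfy $\alpha q/p=\mu$, and let $Z\sim \mathrm{NB}(\alpha,p)$. Then $$d_{TV}(Y,Z)\le \frac{1}{\alpha q}\sum_{i=1}^n\sum_{l=1}^\infty l\,\bigl|a_{i,l+1}-q\,a_{i,l}\bigr| .$$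
   Context: $\mathrm{NB}(\alpha,p)$ denotes the negative binomial distribution with $\mathbf{P}(Z=m)=\binom{\alpha+m-1}{m}p^\alpha q^m$, $m=0,1,\dots$, where $\alpha>0$, $q=1-p\in(0,1)$. The total variation distance is $d_{TV}(Y,X)=\frac12\sum_{m\ge0}|\mathbf{P}(Y=m)-\mathbf{P}(X=m)|$. *)

From Stdlib Require Import Reals.
From Coquelicot Require Import Coquelicot.
Open Scope R_scope.

Fixpoint sum_lt (n : nat) (F : nat -> R) : R :=
  match n with
  | O => 0
  | S k => sum_lt k F + F k
  end.

Definition conv (f g : nat -> R) (m : nat) : R :=
  sum_f_R0 (fun k => f k * g (m - k)%nat) m.

Definition delta0 (m : nat) : R := match m with O => 1 | _ => 0 end.

(* pmf_sum f n = law of X_0 + ... + X_{n-1} for independent X_i with pmfs f i. *)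
Fixpoint pmf_sum (f : nat -> nat -> R) (n : nat) : nat -> R :=
  match n with
  | O => delta0
  | S k => conv (pmf_sum f k) (f k)
  end.

Definition is_pmf (f : nat -> R) : Prop :=
  (forall m, 0 <= f m) /\ is_series f 1.

Fixpoint falling (x : R) (m : nat) : R :=
  match m with
  | O => 1
  | S k => falling x k * (x - INR k)
  end.
Definition gbinom (x : R) (m : nat) : R := falling x m / INR (Factorial.fact m).

Definition nb_pmf (alpha p : R) (m : nat) : R :=
  gbinom (alpha + INR m - 1) m * Rpower p alpha * (1 - p) ^ m.

Definition dTV (f g : nat -> R) : R :=
  / 2 * Series (fun m => Rabs (f m - g m)).

Definition pgf (f : nat -> R) (z : R) : R := PSeries f z.

(* Stein's method for the negative binomial law pi = NB(alpha, p), q = 1 - p.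
   With lam m = q (alpha + m) one has (m+1) pi (m+1) = lam m pi m, so for every
   test function h with values in [0, 1] the equation
   lam m g (m+1) - m g m = h m - pi(h) has a solution g (built from partial
   sums of pi and h pi) whose increments are at most 1/(alpha q).  On the other
   side, M_Y' = M_Y * sum_i G_{X_i} gives (m+1) P(Y = m+1) = sum_k A_k P(Y = m-k)
   with A_k = sum_i a_{i,k+1}; together with alpha q = p mu this rewrites
   E[lam Y g (Y+1) - Y g Y] as sum_j b_j (E g(Y+1) - E g(Y+j+2)) with
   b_j = A_{j+1} - q A_j, which is at most (1/(alpha q)) sum_j (j+1) |b_j|.
   Taking h the indicator of {m | pi m <= P(Y = m)} turns E h(Y) - pi(h) into
   the total variation distance. *)

From Stdlib Require Import Reals Lra Lia Psatz Arith.
From Coquelicot Require Import Coquelicot.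
Open Scope R_scope.

(* Coquelicot's series lemmas speak of [plus], [mult], [scal], [opp], [minus]
   and of equalities in the carrier of [R_NormedModule], which [ring] does not see
   as [R]. *)
Ltac ring_R :=
  cbv beta; cbn [Nat.add];
  repeat (change (plus ?x ?y) with (x + y) || change (mult ?x ?y) with (x * y)
          || change (scal ?x ?y) with (x * y) || change (opp ?x) with (- x)
          || change (minus ?x ?y) with (x - y));
  match goal with |- ?l = ?r => change (@eq R l r) end; ring.

Lemma sum_lt_ext n f g :
  (forall k, (k < n)%nat -> f k = g k) -> sum_lt n f = sum_lt n g.
Proof.
  induction n as [|n IH]; simpl; intros H; auto.
  rewrite IH by (intros; apply H; lia). rewrite H by lia. reflexivity.
Qed.

Lemma sum_lt_minus n f g : sum_lt n (fun k => f k - g k) = sum_lt n f - sum_lt n g.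
Proof. induction n as [|n IH]; simpl; [lra | rewrite IH; lra]. Qed.

Lemma sum_lt_scal n c f : sum_lt n (fun k => c * f k) = c * sum_lt n f.
Proof. induction n as [|n IH]; simpl; [lra | rewrite IH; lra]. Qed.

Lemma sum_lt_0 n : sum_lt n (fun _ => 0) = 0.
Proof. induction n as [|n IH]; simpl; [lra | rewrite IH; lra]. Qed.

Lemma sum_lt_Sl n f : sum_lt (S n) f = f O + sum_lt n (fun k => f (S k)).
Proof. induction n as [|n IH]; simpl in *; [lra | rewrite IH; lra]. Qed.

Lemma sum_lt_le n f g :
  (forall k, (k < n)%nat -> f k <= g k) -> sum_lt n f <= sum_lt n g.
Proof.
  induction n as [|n IH]; simpl; intros H; [lra|].
  assert (f n <= g n) by (apply H; lia).
  assert (sum_lt n f <= sum_lt n g) by (apply IH; intros; apply H; lia).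
  lra.
Qed.

Lemma sum_lt_nonneg n f : (forall k, (k < n)%nat -> 0 <= f k) -> 0 <= sum_lt n f.
Proof. intros H. rewrite <- (sum_lt_0 n). apply sum_lt_le. exact H. Qed.

Lemma sum_lt_term_le n f k :
  (forall j, 0 <= f j) -> (k < n)%nat -> f k <= sum_lt n f.
Proof.
  intros Hf Hk. induction Hk as [|n Hk IH]; simpl.
  - assert (0 <= sum_lt k f) by (apply sum_lt_nonneg; auto). lra.
  - specialize (Hf n). lra.
Qed.

Lemma Rabs_sum_lt_le n f : Rabs (sum_lt n f) <= sum_lt n (fun k => Rabs (f k)).
Proof.
  induction n as [|n IH]; simpl.
  - rewrite Rabs_R0. lra.
  - eapply Rle_trans; [apply Rabs_triang | lra].
Qed.

Lemma sum_f_R0_sum_lt f m : sum_f_R0 f m = sum_lt (S m) f.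
Proof. induction m as [|m IH]; simpl; [lra | rewrite IH; simpl; lra]. Qed.

Lemma sum_n_sum_lt f m : sum_n f m = sum_lt (S m) f.
Proof. rewrite sum_n_Reals. apply sum_f_R0_sum_lt. Qed.

Lemma is_series_iff_sum_lt f (l : R) :
  is_series f l <-> is_lim_seq (fun N => sum_lt N f) l.
Proof.
  split; intros H.
  - apply is_lim_seq_incr_1.
    apply (is_lim_seq_ext (sum_n f)); [intros; apply sum_n_sum_lt | exact H].
  - apply is_lim_seq_incr_1 in H.
    apply (is_lim_seq_ext _ (sum_n f)) in H; [exact H | intros; now rewrite sum_n_sum_lt].
Qed.

Lemma is_lim_seq_unique_R (u : nat -> R) (l1 l2 : R) :
  is_lim_seq u l1 -> is_lim_seq u l2 -> l1 = l2.
Proof.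
  intros H1 H2. apply is_lim_seq_unique in H1. apply is_lim_seq_unique in H2.
  rewrite H1 in H2. now injection H2.
Qed.

Lemma sum_lt_le_is_series f l m :
  is_series f l -> (forall k, (m <= k)%nat -> 0 <= f k) -> sum_lt m f <= l.
Proof.
  intros H Hf. apply is_series_iff_sum_lt in H.
  apply (is_lim_seq_le_loc (fun _ => sum_lt m f) (fun N => sum_lt N f) (sum_lt m f) l); auto.
  - exists m. intros N HN. induction HN as [|N HN IH]; simpl; [lra|].
    specialize (Hf N HN). lra.
  - apply is_lim_seq_const.
Qed.

Lemma is_series_term_le f l m : is_series f l -> (forall k, 0 <= f k) -> f m <= l.
Proof.
  intros H Hf. apply (Rle_trans _ (sum_lt (S m) f)).
  - apply sum_lt_term_le; auto.
  - apply sum_lt_le_is_series with (1 := H). auto.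
Qed.

Lemma is_series_le f g lf lg :
  is_series f lf -> is_series g lg -> (forall k, f k <= g k) -> lf <= lg.
Proof.
  intros Hf Hg H. apply is_series_iff_sum_lt in Hf. apply is_series_iff_sum_lt in Hg.
  apply (is_lim_seq_le_loc _ _ _ _ (ex_intro _ O (fun N _ => sum_lt_le N f g (fun k _ => H k))) Hf Hg).
Qed.

Lemma is_series_sum_lt n (u : nat -> nat -> R) (l : nat -> R) :
  (forall i, (i < n)%nat -> is_series (u i) (l i)) ->
  is_series (fun k => sum_lt n (fun i => u i k)) (sum_lt n l).
Proof.
  induction n as [|n IH]; intros H; simpl.
  - apply is_series_iff_sum_lt.
    apply (is_lim_seq_ext (fun _ => 0)); [intros; now rewrite sum_lt_0 | apply is_lim_seq_const].
  - apply (is_series_plus (fun k => sum_lt n (fun i => u i k)) (u n)).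
    + apply IH. intros; apply H; lia.
    + apply H; lia.
Qed.

Lemma is_series_finite_support (f : nat -> R) m :
  (forall k, (m <= k)%nat -> f k = 0) -> is_series f (sum_lt m f).
Proof.
  intros H. apply is_series_iff_sum_lt.
  apply is_lim_seq_ext_loc with (fun _ => sum_lt m f); [|apply is_lim_seq_const].
  exists m. intros N HN. induction HN as [|N HN IH]; auto.
  simpl. rewrite H by lia. lra.
Qed.

Lemma ex_series_Rabs_le f g :
  (forall k, Rabs (f k) <= g k) -> ex_series g -> ex_series (fun k => Rabs (f k)).
Proof.
  intros H Hg. apply (ex_series_le (fun k => Rabs (f k)) g); auto.
  intros k. change (Rabs (Rabs (f k)) <= g k). rewrite Rabs_Rabsolu. apply H.
Qed.

Lemma Rabs_Series_le f g lg :
  (forall k, Rabs (f k) <= g k) -> is_series g lg -> Rabs (Series f) <= lg.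
Proof.
  intros H Hg.
  assert (Ha : ex_series (fun k => Rabs (f k))) by (apply (ex_series_Rabs_le f g); eauto; eexists; eauto).
  eapply Rle_trans; [apply Series_Rabs; auto|].
  apply (is_series_le (fun k => Rabs (f k)) g); auto. now apply Series_correct.
Qed.

Lemma is_series_tail f m l :
  is_series f l -> is_series (fun k => f (m + k)%nat) (l - sum_lt m f).
Proof.
  intros H. destruct m as [|m].
  - simpl. rewrite Rminus_0_r. exact H.
  - apply is_series_incr_n; [lia|].
    match goal with |- is_series _ ?x => replace x with l; [exact H|] end.
    rewrite sum_n_sum_lt. change (l = l - sum_lt (S m) f + sum_lt (S m) f). lra.
Qed.
Lemma is_lim_seq_sum_lt_Rabs_0 K (r : nat -> nat -> R) :
  (forall k, is_lim_seq (fun N => r N k) 0) ->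
  is_lim_seq (fun N => sum_lt K (fun k => Rabs (r N k))) 0.
Proof.
  intros H. induction K as [|K IH]; simpl; [apply is_lim_seq_const|].
  replace (Finite 0) with (Finite (0 + 0)) by (f_equal; ring).
  apply is_lim_seq_plus'; auto.
  rewrite <- Rabs_R0. apply (is_lim_seq_abs _ 0). auto.
Qed.

(* The tail beyond K is uniformly small and the first K terms converge. *)
Lemma is_lim_seq_Series_dominated (r : nat -> nat -> R) (W : nat -> R) :
  (forall N k, Rabs (r N k) <= W k) -> ex_series W ->
  (forall k, is_lim_seq (fun N => r N k) 0) ->
  is_lim_seq (fun N => Series (r N)) 0.
Proof.
  intros Hb [SW HW] Hl.
  assert (W0 : forall k, 0 <= W k) by (intros k; eapply Rle_trans; [apply Rabs_pos | apply (Hb O)]).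
  assert (Hr : forall N, ex_series (r N)).
  { intros N. apply ex_series_Rabs. apply (ex_series_Rabs_le _ W); [auto | eexists; eauto]. }
  apply is_lim_seq_spec. intros eps.
  assert (he : 0 < eps / 2) by (destruct eps; simpl; lra).
  assert (Ht := proj1 (is_series_iff_sum_lt _ _) HW). apply is_lim_seq_spec in Ht.
  destruct (Ht (mkposreal _ he)) as [K HK]. specialize (HK K (le_n K)). simpl in HK.
  assert (Hf := is_lim_seq_sum_lt_Rabs_0 K r Hl). apply is_lim_seq_spec in Hf.
  destruct (Hf (mkposreal _ he)) as [N0 HN0].
  exists N0. intros N HN. specialize (HN0 N HN). simpl in HN0. rewrite Rminus_0_r in *.
  rewrite Rabs_right in HN0 by (apply Rle_ge, sum_lt_nonneg; intros; apply Rabs_pos).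
  assert (Tail : Rabs (Series (r N) - sum_lt K (r N)) <= SW - sum_lt K W).
  { rewrite <- (is_series_unique _ _ (is_series_tail (r N) K _ (Series_correct _ (Hr N)))).
    apply Rabs_Series_le with (fun k => W (K + k)%nat); auto.
    apply is_series_tail. exact HW. }
  assert (SWK : SW - sum_lt K W < eps / 2).
  { assert (sum_lt K W <= SW) by (apply sum_lt_le_is_series; auto).
    rewrite Rabs_minus_sym, Rabs_right in HK; lra. }
  assert (Fin := Rabs_sum_lt_le K (r N)).
  replace (Series (r N)) with ((Series (r N) - sum_lt K (r N)) + sum_lt K (r N)) by ring.
  eapply Rle_lt_trans; [apply Rabs_triang|]. destruct eps; simpl in *. lra.
Qed.

Lemma is_series_swap (w : nat -> nat -> R) (W : nat -> R) :
  (forall k, ex_series (fun m => Rabs (w k m))) ->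
  (forall k, Series (fun m => Rabs (w k m)) <= W k) -> ex_series W ->
  (forall m, ex_series (fun k => w k m)) /\
  is_series (fun m => Series (fun k => w k m)) (Series (fun k => Series (fun m => w k m))).
Proof.
  intros Ha Hb HW.
  assert (Hwm : forall k m, Rabs (w k m) <= W k).
  { intros k m. eapply Rle_trans; [|apply Hb].
    apply (is_series_term_le (fun m => Rabs (w k m))); [apply Series_correct; auto | intros; apply Rabs_pos]. }
  assert (Ex : forall m, ex_series (fun k => w k m)).
  { intros m. apply ex_series_Rabs. apply (ex_series_Rabs_le _ W); auto. }
  split; auto.
  set (s := fun k => Series (fun m => w k m)).
  assert (Hs : forall k, Rabs (s k) <= W k).
  { intros k. eapply Rle_trans; [|apply Hb]. apply Series_Rabs. auto. }
  assert (Es : ex_series s) by (apply ex_series_Rabs, (ex_series_Rabs_le _ W); auto).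
  apply is_series_iff_sum_lt.
  set (r := fun N k => s k - sum_lt N (fun m => w k m)).
  assert (Hr : forall N, is_series (r N) (Series s - sum_lt N (fun m => Series (fun k => w k m)))).
  { intros N. apply (is_series_minus s (fun k => sum_lt N (fun m => w k m))).
    - apply Series_correct; auto.
    - apply (is_series_sum_lt N (fun m k => w k m)). intros; apply Series_correct; auto. }
  assert (D : is_lim_seq (fun N => Series (r N)) 0).
  { apply is_lim_seq_Series_dominated with (fun k => 2 * W k).
    - intros N k. unfold r, Rminus. eapply Rle_trans; [apply Rabs_triang|]. rewrite Rabs_Ropp.
      assert (X := Rabs_sum_lt_le N (fun m => w k m)).
      assert (Y := sum_lt_le_is_series (fun m => Rabs (w k m)) _ N (Series_correct _ (Ha k)) (fun m _ => Rabs_pos _)).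
      specialize (Hs k). specialize (Hb k). lra.
    - destruct HW as [lw HW]. exists (2 * lw). apply (is_series_scal (V := R_NormedModule) 2 W lw HW).
    - intros k. unfold r. replace 0 with (s k - s k) by ring. apply is_lim_seq_minus'.
      + apply is_lim_seq_const.
      + apply is_series_iff_sum_lt, Series_correct, ex_series_Rabs. auto. }
  apply is_lim_seq_ext with (fun N => Series s - Series (r N)).
  { intros N. rewrite (is_series_unique _ _ (Hr N)). ring. }
  replace (Finite (Series s)) with (Finite (Series s - 0)) by (f_equal; ring).
  apply is_lim_seq_minus'; [apply is_lim_seq_const | exact D].
Qed.

Lemma is_lim_seq_0_bounded (u : nat -> R) :
  is_lim_seq u 0 -> exists M, forall n, Rabs (u n) <= M.
Proof.
  intros H. apply is_lim_seq_spec in H. destruct (H (mkposreal 1 Rlt_0_1)) as [N HN].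
  exists (1 + sum_lt N (fun k => Rabs (u k))). intros n.
  assert (0 <= sum_lt N (fun k => Rabs (u k))) by (apply sum_lt_nonneg; intros; apply Rabs_pos).
  destruct (le_lt_dec N n) as [Hn|Hn].
  - specialize (HN n Hn). simpl in HN. rewrite Rminus_0_r in HN. lra.
  - assert (Rabs (u n) <= sum_lt N (fun k => Rabs (u k))).
    { apply (sum_lt_term_le N (fun k => Rabs (u k))); auto. intros; apply Rabs_pos. }
    lra.
Qed.

Lemma CV_radius_ge_ex_pseries a x : ex_pseries a x -> Rbar_le (Rabs x) (CV_radius a).
Proof.
  intros H. apply ex_pseries_R, ex_series_lim_0 in H.
  destruct (is_lim_seq_0_bounded _ H) as [M HM].
  apply (proj1 (CV_radius_bounded a)). exists M. intros n.
  rewrite Rabs_mult, <- RPow_abs, Rabs_Rabsolu, RPow_abs, <- Rabs_mult. apply HM.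
Qed.

Lemma CV_radius_gt_ex_pseries_ball a r :
  (forall z, Rabs z < r -> ex_pseries a z) ->
  forall z, Rabs z < r -> Rbar_lt (Rabs z) (CV_radius a).
Proof.
  intros H z Hz. set (z' := (Rabs z + r) / 2).
  assert (Hz0 := Rabs_pos z).
  assert (Hz' : Rabs z' = z') by (apply Rabs_right; unfold z'; lra).
  assert (Hle := CV_radius_ge_ex_pseries a z' (H z' ltac:(rewrite Hz'; unfold z'; lra))).
  rewrite Hz' in Hle.
  destruct (CV_radius a) as [c| |]; simpl in *; unfold z' in *; auto; lra.
Qed.

Lemma CV_radius_gt_ex_series u :
  ex_series u -> forall z, Rabs z < 1 -> Rbar_lt (Rabs z) (CV_radius u).
Proof.
  intros [l H] z Hz.
  assert (R1 : Rbar_le (Rabs 1) (CV_radius u)).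
  { apply CV_radius_ge_ex_pseries, ex_pseries_R. exists l.
    apply (is_series_ext u); [intros; rewrite pow1; symmetry; apply Rmult_1_r | exact H]. }
  rewrite Rabs_R1 in R1. destruct (CV_radius u) as [c| |]; simpl in *; auto. lra.
Qed.
Definition nb_rate (alpha p : R) (m : nat) : R := (1 - p) * (alpha + INR m).

Lemma falling_S_shift x k : falling x (S k) = x * falling (x - 1) k.
Proof.
  revert x. induction k as [|k IH]; intros x; [simpl; ring|].
  change (falling x (S (S k))) with (falling x (S k) * (x - INR (S k))).
  rewrite IH. simpl falling. rewrite S_INR. ring.
Qed.

Lemma nb_pmf_0 alpha p : nb_pmf alpha p 0 = Rpower p alpha.
Proof. unfold nb_pmf, gbinom. simpl. lra. Qed.

Lemma nb_pmf_S alpha p m :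
  INR (S m) * nb_pmf alpha p (S m) = nb_rate alpha p m * nb_pmf alpha p m.
Proof.
  unfold nb_pmf, gbinom, nb_rate.
  replace (alpha + INR (S m) - 1) with (alpha + INR m) by (rewrite S_INR; ring).
  rewrite falling_S_shift.
  change (Factorial.fact (S m)) with (S m * Factorial.fact m)%nat. rewrite mult_INR.
  assert (0 < INR (Factorial.fact m)) by apply lt_0_INR, Factorial.lt_O_fact.
  assert (0 < INR (S m)) by (apply lt_0_INR; lia).
  simpl pow. field. lra.
Qed.

Lemma nb_pmf_S_ratio alpha p m :
  nb_pmf alpha p (S m) = nb_rate alpha p m / INR (S m) * nb_pmf alpha p m.
Proof.
  assert (0 < INR (S m)) by (apply lt_0_INR; lia).
  apply Rmult_eq_reg_l with (INR (S m)); [|lra].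
  rewrite nb_pmf_S. field. lra.
Qed.

Lemma is_lim_seq_shifted_ratio c : is_lim_seq (fun n => (c + INR n) / INR (S n)) 1.
Proof.
  apply is_lim_seq_ext with (fun n => 1 + (c - 1) * / INR (S n)).
  { intros n. assert (0 < INR (S n)) by (apply lt_0_INR; lia). rewrite S_INR in *. field. lra. }
  replace (Finite 1) with (Finite (1 + (c - 1) * 0)) by (f_equal; ring).
  apply is_lim_seq_plus'; [apply is_lim_seq_const|].
  replace (Finite ((c - 1) * 0)) with (Rbar_mult (c - 1) 0) by reflexivity.
  apply is_lim_seq_scal_l.
  replace (Finite 0) with (Rbar_inv p_infty) by reflexivity.
  apply is_lim_seq_inv; [|discriminate].
  apply (is_lim_seq_incr_1 INR). apply is_lim_seq_INR.
Qed.

Section NegativeBinomial.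
Variables (al p : R).
Hypothesis Hal : 0 < al.
Hypothesis Hp : 0 < p < 1.
Let nb := nb_pmf al p.

Lemma nb_rate_ge m : (1 - p) * al <= nb_rate al p m.
Proof. unfold nb_rate. assert (0 <= INR m) by apply pos_INR. nra. Qed.

Lemma nb_rate_pos m : 0 < nb_rate al p m.
Proof. assert (H := nb_rate_ge m). nra. Qed.

Lemma nb_pmf_pos m : 0 < nb_pmf al p m.
Proof.
  induction m as [|m IH].
  - rewrite nb_pmf_0. unfold Rpower. apply exp_pos.
  - rewrite nb_pmf_S_ratio. assert (0 < INR (S m)) by (apply lt_0_INR; lia).
    assert (Hr := nb_rate_pos m).
    apply Rmult_lt_0_compat; auto. apply Rdiv_lt_0_compat; auto.
Qed.

Lemma is_lim_seq_nb_pmf_ratio : is_lim_seq (fun n => Rabs (nb (S n) / nb n)) (1 - p).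
Proof.
  apply is_lim_seq_ext with (fun n => (1 - p) * ((al + INR n) / INR (S n))).
  { intros n. unfold nb. assert (H := nb_pmf_pos n). assert (Hr := nb_rate_pos n).
    rewrite nb_pmf_S_ratio. assert (0 < INR (S n)) by (apply lt_0_INR; lia).
    rewrite Rabs_right.
    - unfold nb_rate. field. lra.
    - apply Rle_ge. unfold Rdiv. rewrite Rmult_assoc, Rinv_r, Rmult_1_r by lra.
      apply Rmult_le_pos; [lra|]. left. apply Rinv_0_lt_compat. lra. }
  replace (Finite (1 - p)) with (Rbar_mult (1 - p) 1) by (simpl; f_equal; ring).
  apply is_lim_seq_scal_l, is_lim_seq_shifted_ratio.
Qed.

Lemma ex_series_nb_pmf : ex_series nb.
Proof.
  apply ex_series_Rabs, ex_series_DAlembert with (1 - p); [lra | | apply is_lim_seq_nb_pmf_ratio].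
  intros n. apply Rgt_not_eq, nb_pmf_pos.
Qed.

Lemma ex_series_nb_moment : ex_series (fun n => INR n * nb n).
Proof.
  apply ex_series_incr_1, ex_series_Rabs, ex_series_DAlembert with (1 - p); [lra| |].
  - intros n. apply Rgt_not_eq, Rmult_lt_0_compat; [apply lt_0_INR; lia | apply nb_pmf_pos].
  - apply is_lim_seq_ext with (fun n => (1 - p) * ((al + 1 + INR n) / INR (S n))).
    + intros n. unfold nb. rewrite nb_pmf_S.
      assert (Hn := nb_pmf_pos (S n)). assert (0 < INR (S n)) by (apply lt_0_INR; lia).
      assert (Hr := nb_rate_pos (S n)).
      rewrite Rabs_right.
      * unfold nb_rate. rewrite S_INR in H |- *. field. lra.
      * apply Rle_ge, Rdiv_le_0_compat; [nra | apply Rmult_lt_0_compat; lra].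
    + replace (Finite (1 - p)) with (Rbar_mult (1 - p) 1) by (simpl; f_equal; ring).
      apply is_lim_seq_scal_l, is_lim_seq_shifted_ratio.
Qed.

Lemma CV_radius_nb_pmf_gt x : Rabs x <= 1 -> Rbar_lt (Rabs x) (CV_radius nb).
Proof.
  intros H.
  rewrite (CV_radius_finite_DAlembert nb (1 - p)); [| intros n; apply Rgt_not_eq, nb_pmf_pos | lra
    | apply is_lim_seq_nb_pmf_ratio].
  simpl. assert (1 < / (1 - p)) by (rewrite <- Rinv_1; apply Rinv_lt_contravar; lra). lra.
Qed.

(* The recurrence for [nb] is the differential equation (1 - q x) M' = q alpha M
   for its generating function M. *)
Lemma nb_pgf_ode x : Rabs x <= 1 ->
  (1 - (1 - p) * x) * PSeries (PS_derive nb) x = (1 - p) * al * PSeries nb x.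
Proof.
  intros Hx. assert (Hr := CV_radius_nb_pmf_gt x Hx).
  assert (E : PSeries (PS_derive nb) x =
     PSeries (PS_plus (PS_scal ((1 - p) * al) nb) (PS_scal (1 - p) (PS_incr_1 (PS_derive nb)))) x).
  { apply PSeries_ext. intros k.
    assert (H1 : PS_derive nb k = (1 - p) * al * nb k + (1 - p) * (INR k * nb k)).
    { unfold PS_derive, nb. rewrite nb_pmf_S. unfold nb_rate. ring. }
    assert (H2 : PS_incr_1 (PS_derive nb) k = INR k * nb k).
    { destruct k; [simpl; change (0 = 0 * nb 0); ring | reflexivity]. }
    rewrite H1. unfold PS_plus, PS_scal. rewrite H2.
    change (plus (scal ((1 - p) * al) (nb k)) (scal (1 - p) (INR k * nb k)))
      with ((1 - p) * al * nb k + (1 - p) * (INR k * nb k)).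
    ring. }
  rewrite PSeries_plus, !PSeries_scal, PSeries_incr_1 in E.
  - rewrite Rmult_minus_distr_r. rewrite E at 1. ring.
  - apply ex_pseries_scal; [apply Rmult_comm | apply CV_radius_inside; auto].
  - apply ex_pseries_scal; [apply Rmult_comm|]. apply CV_radius_inside.
    rewrite CV_radius_incr_1, CV_radius_derive. auto.
Qed.

(* [M x * (1 - q x)^alpha] has derivative 0 on [0, 1], so M 1 = M 0 / p^alpha = 1. *)
Let pgf_scaled x := PSeries nb x * Rpower (1 - (1 - p) * x) al.

Lemma is_derive_pgf_scaled x : 0 <= x <= 1 -> is_derive pgf_scaled x 0.
Proof.
  intros Hx.
  assert (Hax : Rabs x <= 1) by (rewrite Rabs_right; lra).
  assert (Hpos : 0 < 1 - (1 - p) * x) by nra.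
  assert (D1 := is_derive_PSeries nb x (CV_radius_nb_pmf_gt x Hax)).
  assert (D2 : is_derive (fun t => Rpower (1 - (1 - p) * t) al) x
      (scal (- (1 - p)) (al * Rpower (1 - (1 - p) * x) (al - 1)))).
  { apply (is_derive_comp (fun u => Rpower u al) (fun t => 1 - (1 - p) * t)).
    - apply is_derive_Reals, derivable_pt_lim_power. auto.
    - auto_derive; auto. ring. }
  assert (D := is_derive_mult _ _ _ _ _ D1 D2 Rmult_comm).
  assert (R1 : Rpower (1 - (1 - p) * x) al
               = Rpower (1 - (1 - p) * x) (al - 1) * (1 - (1 - p) * x)).
  { rewrite <- (Rpower_1 (1 - (1 - p) * x)) at 3 by auto. rewrite <- Rpower_plus. f_equal. ring. }
  assert (ODE := nb_pgf_ode x Hax).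
  apply is_derive_Reals. apply is_derive_Reals in D. unfold pgf_scaled.
  replace 0 with (PSeries (PS_derive nb) x * Rpower (1 - (1 - p) * x) al +
     PSeries nb x * (- (1 - p) * (al * Rpower (1 - (1 - p) * x) (al - 1)))); [exact D|].
  rewrite R1.
  transitivity (Rpower (1 - (1 - p) * x) (al - 1)
    * ((1 - (1 - p) * x) * PSeries (PS_derive nb) x - (1 - p) * al * PSeries nb x)).
  - ring.
  - rewrite ODE. ring.
Qed.

Lemma is_series_nb_pmf : is_series nb 1.
Proof.
  destruct (MVT_gen pgf_scaled 0 1 (fun _ => 0)) as [c [_ E]].
  { intros y Hy. rewrite Rmin_left, Rmax_right in Hy by lra. apply is_derive_pgf_scaled. lra. }
  { intros y Hy. rewrite Rmin_left, Rmax_right in Hy by lra. apply continuity_pt_filterlim.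
    apply (ex_derive_continuous (K := R_AbsRing) (V := R_NormedModule)).
    eexists. apply is_derive_pgf_scaled. lra. }
  unfold pgf_scaled in E. rewrite PSeries_0 in E.
  replace (1 - (1 - p) * 1) with p in E by ring. replace (1 - (1 - p) * 0) with 1 in E by ring.
  replace (Rpower 1 al) with 1 in E by (unfold Rpower; rewrite ln_1, Rmult_0_r, exp_0; auto).
  unfold nb in E. rewrite nb_pmf_0 in E.
  assert (Hpw : 0 < Rpower p al) by (unfold Rpower; apply exp_pos).
  assert (PS1 : PSeries nb 1 = 1) by (apply Rmult_eq_reg_r with (Rpower p al); unfold nb; lra).
  assert (S1 : Series nb = 1).
  { rewrite <- PS1. apply Series_ext. intros; rewrite pow1; ring. }
  rewrite <- S1. apply Series_correct, ex_series_nb_pmf.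
Qed.

End NegativeBinomial.

Definition nb_cdf (alpha p : R) (m : nat) : R := sum_lt m (nb_pmf alpha p).

Lemma nb_cdf_S alpha p m : nb_cdf alpha p (S m) = nb_cdf alpha p m + nb_pmf alpha p m.
Proof. reflexivity. Qed.

Section NegativeBinomialCdf.
Variables (al p : R).
Hypothesis Hal : 0 < al.
Hypothesis Hp : 0 < p < 1.
Let nb := nb_pmf al p.
Let F := nb_cdf al p.
Let lam := nb_rate al p.
Let partial_mean m := sum_lt m (fun k => INR k * nb k).
Let mean := Series (fun k => INR k * nb k).

Lemma nb_partial_mean_eq m : (1 - p) * al * F m = p * partial_mean m + INR m * nb m.
Proof.
  induction m as [|m IH]; unfold F, nb_cdf, partial_mean, nb in *; cbn [sum_lt]; [simpl; ring|].
  rewrite nb_pmf_S. unfold nb_rate. lra.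
Qed.

Lemma nb_cdf_le_1 m : F m <= 1.
Proof.
  apply (sum_lt_le_is_series nb 1 m); [apply is_series_nb_pmf; auto|].
  intros; left; apply nb_pmf_pos; auto.
Qed.

Lemma nb_cdf_nonneg m : 0 <= F m.
Proof. apply sum_lt_nonneg. intros; left; apply nb_pmf_pos; auto. Qed.

Lemma partial_mean_nonneg m : 0 <= partial_mean m.
Proof.
  apply sum_lt_nonneg. intros k _.
  apply Rmult_le_pos; [apply pos_INR | left; apply nb_pmf_pos; auto].
Qed.

Lemma partial_mean_le m : partial_mean m <= INR m * F m.
Proof.
  unfold partial_mean, F, nb_cdf. rewrite <- sum_lt_scal. apply sum_lt_le. intros k Hk.
  assert (INR k <= INR m) by (apply le_INR; lia). assert (H0 := nb_pmf_pos al p Hal Hp k).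
  unfold nb. nra.
Qed.

Lemma nb_mean_eq : (1 - p) * al = p * mean.
Proof.
  assert (Hm := ex_series_nb_moment al p Hal Hp).
  assert (H1 : is_lim_seq (fun m => (1 - p) * al * F m) ((1 - p) * al * 1)).
  { apply (is_lim_seq_scal_l _ _ 1), is_series_iff_sum_lt, is_series_nb_pmf; auto. }
  assert (H2 : is_lim_seq (fun m => p * partial_mean m + INR m * nb m) (p * mean + 0)).
  { apply is_lim_seq_plus'.
    - apply (is_lim_seq_scal_l _ _ mean), is_series_iff_sum_lt, Series_correct, Hm.
    - apply ex_series_lim_0, Hm. }
  apply (is_lim_seq_ext _ _ _ (fun m => eq_sym (nb_partial_mean_eq m))) in H2.
  assert (E := is_lim_seq_unique_R _ _ _ H1 H2). lra.
Qed.

Lemma nb_tail_mean_ge m : INR m * (1 - F m) <= mean - partial_mean m.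
Proof.
  assert (Hs : is_series (fun k => INR k * nb k - INR m * nb k) (mean - INR m * 1)).
  { apply (is_series_minus (fun k => INR k * nb k) (fun k => INR m * nb k)).
    - apply Series_correct, ex_series_nb_moment; auto.
    - apply (is_series_scal (V := R_NormedModule) (INR m) nb 1), is_series_nb_pmf; auto. }
  assert (H := sum_lt_le_is_series _ _ m Hs).
  rewrite sum_lt_minus, sum_lt_scal in H.
  assert (partial_mean m - INR m * F m <= mean - INR m * 1); [|lra].
  apply H. intros k Hk. assert (INR m <= INR k) by (apply le_INR; lia).
  assert (X := nb_pmf_pos al p Hal Hp k). unfold nb. nra.
Qed.

Lemma nb_rate_cdf_le m : lam m * F m <= INR m * F (S m).
Proof.
  assert (E := nb_partial_mean_eq m). assert (M := partial_mean_le m).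
  unfold F, lam in *. rewrite nb_cdf_S. unfold nb_rate. fold nb. nra.
Qed.

Lemma nb_tail_rate_le m : INR m * (1 - F (S m)) <= lam m * (1 - F m).
Proof.
  assert (E := nb_partial_mean_eq m). assert (M := nb_mean_eq). assert (T := nb_tail_mean_ge m).
  unfold F, lam in *. rewrite nb_cdf_S. unfold nb_rate. fold nb. nra.
Qed.

(* This is where the constant 1/(alpha q) of the theorem comes from. *)
Lemma nb_stein_factor_le m : (0 < m)%nat ->
  (1 - F (S m)) / lam m + F m / INR m <= / (al * (1 - p)).
Proof.
  intros Hm. assert (Hm' : 0 < INR m) by (apply lt_0_INR; auto).
  assert (E := nb_partial_mean_eq m). assert (L1 := nb_cdf_le_1 (S m)).
  assert (P0 := nb_pmf_pos al p Hal Hp m). assert (M0 := partial_mean_nonneg m).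
  assert (A1 : al * (1 - F (S m)) / (al + INR m) <= 1 - F (S m)).
  { apply Rmult_le_reg_r with (al + INR m); [lra|].
    replace (al * (1 - F (S m)) / (al + INR m) * (al + INR m)) with (al * (1 - F (S m)))
      by (field; lra).
    nra. }
  assert (A2 : (1 - p) * al * F m / INR m <= F (S m)).
  { unfold F in *. rewrite E, nb_cdf_S. apply Rmult_le_reg_r with (INR m); [lra|].
    replace ((p * partial_mean m + INR m * nb m) / INR m * INR m)
      with (p * partial_mean m + INR m * nb m) by (field; lra).
    assert (partial_mean m <= INR m * nb_cdf al p m) by apply partial_mean_le.
    unfold nb in *. nra. }
  apply Rmult_le_reg_l with (al * (1 - p)); [nra|]. rewrite Rinv_r by nra.
  replace (al * (1 - p) * ((1 - F (S m)) / lam m + F m / INR m))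
    with (al * (1 - F (S m)) / (al + INR m) + (1 - p) * al * F m / INR m);
    [lra | unfold lam, nb_rate; field; lra].
Qed.

(* Beyond m > 2 q alpha / p the tail inequality bounds 1 - F (m + 1) by a
   multiple of nb m; below that point there are finitely many m. *)
Lemma nb_tail_ratio_bounded : exists K, 0 < K /\ forall m, (1 - F (S m)) / nb m <= K.
Proof.
  destruct (INR_archimed 1 (2 * (1 - p) * al / p)) as [N HN]; [lra|].
  rewrite Rmult_1_r in HN.
  set (K0 := sum_lt (S N) (fun k => / nb k)).
  assert (Hinv : forall k, 0 < / nb k) by (intros; apply Rinv_0_lt_compat, nb_pmf_pos; auto).
  assert (HK0 : 0 <= K0) by (apply sum_lt_nonneg; intros; left; auto).
  assert (HK : 0 < 2 * (1 - p) * (al + 1) / p) by (apply Rdiv_lt_0_compat; nra).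
  exists (2 * (1 - p) * (al + 1) / p + K0). split; [lra|].
  intros m. assert (P0 : 0 < nb m) by (apply nb_pmf_pos; auto). assert (L1 := nb_cdf_le_1 (S m)).
  assert (F0 := nb_cdf_nonneg (S m)).
  destruct (le_lt_dec m N) as [Hm|Hm].
  - assert ((1 - F (S m)) / nb m <= / nb m) by (unfold Rdiv; specialize (Hinv m); nra).
    assert (/ nb m <= K0) by (apply (sum_lt_term_le (S N) (fun k => / nb k)); [intros; left; auto | lia]).
    lra.
  - assert (Hm' : INR N < INR m) by (apply lt_INR; auto).
    assert (Hm1 : 1 <= INR m) by (apply (le_INR 1); lia).
    assert (T := nb_tail_rate_le m). unfold F in *. rewrite nb_cdf_S in L1, T |- *. fold nb in L1, T |- *.
    assert (Hpm : 2 * (1 - p) * al < p * INR m).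
    { apply Rmult_lt_reg_r with (/ p); [apply Rinv_0_lt_compat; lra|].
      replace (p * INR m * / p) with (INR m) by (field; lra). unfold Rdiv in HN. lra. }
    assert (Hb : (p * INR m / 2) * (1 - (nb_cdf al p m + nb m)) <= lam m * nb m).
    { assert ((p * INR m / 2) * (1 - (nb_cdf al p m + nb m))
              <= (p * INR m - (1 - p) * al) * (1 - (nb_cdf al p m + nb m)))
        by (apply Rmult_le_compat_r; lra).
      unfold lam, nb_rate in *. nra. }
    assert (Hlam : lam m <= (1 - p) * (al + 1) * INR m).
    { unfold lam, nb_rate. rewrite Rmult_assoc. apply Rmult_le_compat_l; nra. }
    enough ((1 - (nb_cdf al p m + nb m)) / nb m <= 2 * (1 - p) * (al + 1) / p) by lra.
    apply Rmult_le_reg_r with (nb m * (p * INR m / 2)); [apply Rmult_lt_0_compat; [auto | nra]|].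
    replace ((1 - (nb_cdf al p m + nb m)) / nb m * (nb m * (p * INR m / 2)))
      with ((p * INR m / 2) * (1 - (nb_cdf al p m + nb m))) by (field; lra).
    replace (2 * (1 - p) * (al + 1) / p * (nb m * (p * INR m / 2)))
      with ((1 - p) * (al + 1) * INR m * nb m) by (field; lra).
    nra.
Qed.

End NegativeBinomialCdf.

(* [g (m+1) - g m] for the Stein solution below, in terms of u = F m, v = F (m+1),
   w = nb m, the rate l, m, the partial sum s of h nb, h m and the remaining
   mass t of h nb beyond m; it is affine in (s, h m, t), hence extremal at the
   corners of their ranges. *)
Lemma Rabs_stein_increment_le u v w l m s hm t :
  v = u + w -> 0 < w -> 0 < l -> 0 < m -> 0 <= hm <= 1 -> 0 <= s <= u -> 0 <= t <= 1 - v ->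
  l * u <= m * v -> m * (1 - v) <= l * (1 - u) ->
  Rabs (((s + hm * w) * (1 - v) - t * v) / (l * w) - (s * (1 - u) - (t + hm * w) * u) / (m * w))
    <= (1 - v) / l + u / m.
Proof.
  intros Ev Hw Hl Hm Hh Hs Ht S1 S2.
  set (X := ((s + hm * w) * (1 - v) - t * v) / (l * w) - (s * (1 - u) - (t + hm * w) * u) / (m * w)).
  set (K1 := v / l - u / m). set (K2 := (1 - v) / l - (1 - u) / m). set (c := (1 - v) / l + u / m).
  assert (I1 : w * X = s * K2 + hm * w * c - t * K1) by (unfold X, K1, K2, c; field; lra).
  assert (I2 : u * K2 - (1 - v) * K1 = - w * c) by (unfold K1, K2, c; rewrite Ev; field; lra).
  assert (HK1 : 0 <= K1).
  { unfold K1. apply Rmult_le_reg_r with (l * m); [nra|].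
    replace ((v / l - u / m) * (l * m)) with (m * v - l * u) by (field; lra). lra. }
  assert (HK2 : K2 <= 0).
  { unfold K2. apply Rmult_le_reg_r with (l * m); [nra|].
    replace (((1 - v) / l - (1 - u) / m) * (l * m)) with (m * (1 - v) - l * (1 - u))
      by (field; lra).
    lra. }
  assert (Hc : 0 <= c).
  { unfold c. assert (0 <= (1 - v) / l) by (apply Rdiv_le_0_compat; lra).
    assert (0 <= u / m) by (apply Rdiv_le_0_compat; lra). lra. }
  assert (U : w * X <= w * c).
  { rewrite I1. assert (s * K2 <= 0) by nra. assert (0 <= t * K1) by nra.
    assert (0 <= (1 - hm) * (w * c)) by (apply Rmult_le_pos; nra). nra. }
  assert (Lo : - (w * c) <= w * X).
  { rewrite I1. assert (u * K2 <= s * K2) by nra. assert (t * K1 <= (1 - v) * K1) by nra.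
    assert (0 <= hm * w * c) by (apply Rmult_le_pos; nra). nra. }
  apply Rabs_le. split; nra.
Qed.

Section SteinSolution.
Variables (al p : R).
Hypothesis Hal : 0 < al.
Hypothesis Hp : 0 < p < 1.
Variable h : nat -> R.
Hypothesis Hh : forall k, 0 <= h k <= 1.
Let nb := nb_pmf al p.
Let F := nb_cdf al p.
Let lam := nb_rate al p.

Definition nb_expect := Series (fun k => h k * nb k).
Let partial_expect m := sum_lt m (fun k => h k * nb k).
Let numer m := partial_expect (S m) - nb_expect * F (S m).

(* The solution of [lam m * g (S m) - m * g m = h m - nb_expect] with g 0 = 0. *)
Definition stein_sol m :=
  match m with O => 0 | S m' => numer m' / (lam m' * nb m') end.

Lemma h_nb_nonneg k : 0 <= h k * nb k.
Proof. assert (X := nb_pmf_pos al p Hal Hp k). specialize (Hh k). unfold nb. nra. Qed.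

Lemma h_nb_le k : h k * nb k <= nb k.
Proof. assert (X := nb_pmf_pos al p Hal Hp k). specialize (Hh k). unfold nb. nra. Qed.

Lemma is_series_nb_expect : is_series (fun k => h k * nb k) nb_expect.
Proof.
  apply Series_correct, ex_series_Rabs, (ex_series_Rabs_le _ nb).
  - intros k. rewrite Rabs_right; [apply h_nb_le | apply Rle_ge, h_nb_nonneg].
  - apply ex_series_nb_pmf; auto.
Qed.

Lemma partial_expect_le m : partial_expect m <= nb_expect.
Proof. apply sum_lt_le_is_series; [apply is_series_nb_expect | intros; apply h_nb_nonneg]. Qed.

Lemma expect_tail_le m : nb_expect - partial_expect m <= 1 - F m.
Proof.
  assert (Hs : is_series (fun k => nb k - h k * nb k) (1 - nb_expect)).
  { apply (is_series_minus nb (fun k => h k * nb k));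
      [apply is_series_nb_pmf; auto | apply is_series_nb_expect]. }
  assert (H := sum_lt_le_is_series _ _ m Hs).
  rewrite sum_lt_minus in H.
  assert (F m - partial_expect m <= 1 - nb_expect); [|lra].
  apply H. intros k _. assert (X := h_nb_le k). lra.
Qed.

Lemma partial_expect_bounds m : 0 <= partial_expect m <= F m.
Proof.
  split; [apply sum_lt_nonneg; intros; apply h_nb_nonneg|].
  apply sum_lt_le. intros; apply h_nb_le.
Qed.

Lemma stein_sol_eq m : lam m * stein_sol (S m) - INR m * stein_sol m = h m - nb_expect.
Proof.
  assert (L : 0 < lam m) by (apply nb_rate_pos; auto).
  assert (P : 0 < nb m) by (apply nb_pmf_pos; auto).
  destruct m as [|m].
  - simpl stein_sol. unfold numer, partial_expect, F, nb_cdf. cbn [sum_lt]. simpl INR.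
    fold nb. field. lra.
  - assert (L' : 0 < lam m) by (apply nb_rate_pos; auto).
    assert (P' : 0 < nb m) by (apply nb_pmf_pos; auto).
    unfold stein_sol. replace (lam m * nb m) with (INR (S m) * nb (S m)) by apply nb_pmf_S.
    assert (0 < INR (S m)) by (apply lt_0_INR; lia).
    unfold numer, partial_expect, F. rewrite !nb_cdf_S. cbn [sum_lt]. fold nb. field. lra.
Qed.

Lemma Rabs_stein_numer_le m : Rabs (numer m) <= 1 - F (S m).
Proof.
  assert (R1 := partial_expect_le (S m)). assert (R2 := expect_tail_le (S m)).
  assert (H := partial_expect_bounds (S m)). assert (V := nb_cdf_le_1 al p Hal Hp (S m)).
  fold F in V. unfold numer.
  replace (partial_expect (S m) - nb_expect * F (S m)) with
     (partial_expect (S m) * (1 - F (S m)) - (nb_expect - partial_expect (S m)) * F (S m)) by ring.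
  apply Rabs_le. split; nra.
Qed.

Lemma stein_sol_increment_le m : (0 < m)%nat ->
  Rabs (stein_sol (S m) - stein_sol m) <= / (al * (1 - p)).
Proof.
  intros Hm. destruct m as [|m']; [lia|]. set (m := S m').
  eapply Rle_trans; [|exact (nb_stein_factor_le al p Hal Hp m Hm)].
  assert (E1 : stein_sol (S m) = ((partial_expect m + h m * nb m) * (1 - F (S m))
                 - (nb_expect - partial_expect (S m)) * F (S m)) / (lam m * nb m)).
  { unfold stein_sol, numer. f_equal. unfold partial_expect. cbn [sum_lt]. ring. }
  assert (E2 : stein_sol m = (partial_expect m * (1 - F m)
                 - ((nb_expect - partial_expect (S m)) + h m * nb m) * F m) / (INR m * nb m)).
  { unfold m, stein_sol. replace (lam m' * nb m') with (INR (S m') * nb (S m')) by apply nb_pmf_S.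
    unfold numer. f_equal. unfold partial_expect. cbn [sum_lt]. ring. }
  rewrite E1, E2. apply Rabs_stein_increment_le.
  - reflexivity.
  - apply nb_pmf_pos; auto.
  - apply nb_rate_pos; auto.
  - apply lt_0_INR; auto.
  - apply Hh.
  - apply partial_expect_bounds.
  - split; [assert (X := partial_expect_le (S m)); lra | apply expect_tail_le].
  - apply nb_rate_cdf_le; auto.
  - apply nb_tail_rate_le; auto.
Qed.

Lemma stein_sol_rate_bounded : exists K, forall m, Rabs (lam m * stein_sol (S m)) <= K.
Proof.
  destruct (nb_tail_ratio_bounded al p Hal Hp) as [K [_ HK]].
  exists K. intros m.
  assert (L : 0 < lam m) by (apply nb_rate_pos; auto).
  assert (P : 0 < nb m) by (apply nb_pmf_pos; auto).
  unfold stein_sol.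
  replace (lam m * (numer m / (lam m * nb m))) with (numer m / nb m) by (field; lra).
  unfold Rdiv. rewrite Rabs_mult, (Rabs_right (/ nb m)) by (left; apply Rinv_0_lt_compat; auto).
  eapply Rle_trans; [|apply (HK m)].
  apply Rmult_le_compat_r; [left; apply Rinv_0_lt_compat; auto | apply Rabs_stein_numer_le].
Qed.

Lemma stein_sol_bounded : exists G, forall m, Rabs (stein_sol m) <= G.
Proof.
  destruct stein_sol_rate_bounded as [K HK].
  exists (K / (al * (1 - p))). intros [|m].
  - simpl. rewrite Rabs_R0. apply Rdiv_le_0_compat; [|nra].
    specialize (HK O). assert (0 <= Rabs (lam 0%nat * stein_sol 1)) by apply Rabs_pos. lra.
  - specialize (HK m). assert (L : (1 - p) * al <= lam m) by (apply nb_rate_ge; auto).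
    rewrite Rabs_mult, Rabs_right in HK by (apply Rle_ge; nra).
    apply Rmult_le_reg_l with (al * (1 - p)); [nra|].
    replace (al * (1 - p) * (K / (al * (1 - p)))) with K by (field; nra).
    assert (0 <= Rabs (stein_sol (S m))) by apply Rabs_pos. nra.
Qed.

End SteinSolution.

Lemma PSeries_delta0 t : PSeries delta0 t = 1.
Proof.
  unfold PSeries. apply is_series_unique.
  replace 1 with (sum_lt 1 (fun k => delta0 k * t ^ k)) by (simpl; ring).
  apply is_series_finite_support. intros [|k] Hk; [lia | simpl; ring].
Qed.

Lemma is_pmf_delta0 : is_pmf delta0.
Proof.
  split; [intros [|m]; simpl; lra|].
  replace 1 with (sum_lt 1 delta0) by (simpl; ring).
  apply is_series_finite_support. intros [|m] Hm; [lia | reflexivity].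
Qed.

Lemma is_pmf_conv u v : is_pmf u -> is_pmf v -> is_pmf (conv u v).
Proof.
  intros [Hu Su] [Hv Sv]. split.
  - intros m. unfold conv. rewrite sum_f_R0_sum_lt.
    apply sum_lt_nonneg. intros; apply Rmult_le_pos; auto.
  - replace 1 with (1 * 1) by ring. apply is_series_mult_pos; auto.
Qed.

Lemma CV_radius_pmf_gt u : is_pmf u -> forall z, Rabs z < 1 -> Rbar_lt (Rabs z) (CV_radius u).
Proof. intros [_ Hs]. apply CV_radius_gt_ex_series. eexists; eauto. Qed.

Definition logderiv_coef (n : nat) (a : nat -> nat -> R) (m : nat) : R :=
  sum_lt n (fun i => a i (S m)).

Section LawOfSum.
Variables (n : nat) (f : nat -> nat -> R) (a : nat -> nat -> R).
Hypothesis Hpmf : forall i, (i < n)%nat -> is_pmf (f i).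
Hypothesis HG : forall i, (i < n)%nat ->
  exists r, 0 < r /\
    forall z, Rabs z < r ->
      pgf (f i) z <> 0 /\
      ex_pseries (fun m => a i (S m)) z /\
      Derive (pgf (f i)) z / pgf (f i) z = PSeries (fun m => a i (S m)) z.
Let Y := pmf_sum f.
Let G i := PSeries (fun m => a i (S m)).

Lemma is_pmf_pmf_sum k : (k <= n)%nat -> is_pmf (Y k).
Proof.
  induction k as [|k IH]; intros Hk; [apply is_pmf_delta0|].
  apply is_pmf_conv; [apply IH; lia | apply Hpmf; lia].
Qed.

Lemma PSeries_pmf_sum_S k t : (k < n)%nat -> Rabs t < 1 ->
  PSeries (Y (S k)) t = PSeries (Y k) t * PSeries (f k) t.
Proof.
  intros Hk Ht. apply PSeries_mult.
  - apply CV_radius_pmf_gt; auto. apply is_pmf_pmf_sum. lia.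
  - apply CV_radius_pmf_gt; auto.
Qed.

Lemma is_derive_pgf_factor i : (i < n)%nat ->
  exists r, 0 < r /\ r <= 1 /\ forall z, Rabs z < r ->
    Rbar_lt (Rabs z) (CV_radius (fun m => a i (S m))) /\
    is_derive (PSeries (f i)) z (PSeries (f i) z * G i z).
Proof.
  intros Hi. destruct (HG i Hi) as [r [Hr Hf]].
  exists (Rmin r 1). split; [apply Rmin_pos; lra|]. split; [apply Rmin_r|].
  intros z Hz.
  assert (Hzr : Rabs z < r) by (eapply Rlt_le_trans; [exact Hz | apply Rmin_l]).
  assert (Hz1 : Rabs z < 1) by (eapply Rlt_le_trans; [exact Hz | apply Rmin_r]).
  destruct (Hf z Hzr) as [Hnz [_ HGz]]. split.
  - apply CV_radius_gt_ex_pseries_ball with r; auto. intros; apply Hf; auto.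
  - replace (PSeries (f i) z * G i z) with (Derive (PSeries (f i)) z).
    + apply Derive_correct, ex_derive_PSeries, CV_radius_pmf_gt; auto.
    + unfold G, pgf in *. rewrite <- HGz. unfold Rdiv.
      rewrite Rmult_comm, Rmult_assoc, Rinv_l, Rmult_1_r by exact Hnz. reflexivity.
Qed.

Lemma is_derive_PSeries_pmf_sum k : (k <= n)%nat ->
  exists r, 0 < r /\ r <= 1 /\ forall z, Rabs z < r ->
    (forall i, (i < k)%nat -> Rbar_lt (Rabs z) (CV_radius (fun m => a i (S m)))) /\
    is_derive (PSeries (Y k)) z (PSeries (Y k) z * sum_lt k (fun i => G i z)).
Proof.
  induction k as [|k IH]; intros Hk.
  - exists 1. split; [lra|]. split; [lra|]. intros z _. split; [intros; lia|].
    apply (is_derive_ext (fun _ => 1)); [intros; symmetry; apply PSeries_delta0|].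
    replace (PSeries (Y 0%nat) z * sum_lt 0 (fun i => G i z)) with 0 by (simpl; ring).
    apply is_derive_Reals, derivable_pt_lim_const.
  - destruct (IH ltac:(lia)) as [r1 [Hr1 [Hr1' Hd]]].
    destruct (is_derive_pgf_factor k ltac:(lia)) as [r2 [Hr2 [_ Hf]]].
    exists (Rmin r1 r2). split; [apply Rmin_pos; auto|]. split; [eapply Rle_trans; [apply Rmin_l | auto]|].
    intros z Hz.
    assert (Hz1 : Rabs z < r1) by (eapply Rlt_le_trans; [exact Hz | apply Rmin_l]).
    assert (Hz2 : Rabs z < r2) by (eapply Rlt_le_trans; [exact Hz | apply Rmin_r]).
    destruct (Hd z Hz1) as [Hrad D1]. destruct (Hf z Hz2) as [Hrad2 D2]. split.
    + intros i Hi. destruct (Nat.eq_dec i k) as [->|]; [exact Hrad2 | apply Hrad; lia].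
    + assert (D := is_derive_mult _ _ _ _ _ D1 D2 Rmult_comm).
      assert (Hball : 0 < 1 - Rabs z) by lra.
      apply (is_derive_ext_loc (fun t => PSeries (Y k) t * PSeries (f k) t)).
      * exists (mkposreal _ Hball). intros t Ht. symmetry. apply PSeries_pmf_sum_S; [lia|].
        change (Rabs (t - z) < 1 - Rabs z) in Ht. assert (X := Rabs_triang_inv t z). lra.
      * replace (PSeries (Y (S k)) z * sum_lt (S k) (fun i => G i z)) with
          (plus (mult (PSeries (Y k) z * sum_lt k (fun i => G i z)) (PSeries (f k) z))
                (mult (PSeries (Y k) z) (PSeries (f k) z * G k z))); [exact D|].
        rewrite PSeries_pmf_sum_S by (lia || lra). simpl sum_lt. ring_R.
Qed.

(* Comparing coefficients in M_Y' = M_Y * sum_i G_i. *)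
Lemma pmf_sum_S_eq m : INR (S m) * Y n (S m) =
  sum_f_R0 (fun k => logderiv_coef n a k * Y n (m - k)%nat) m.
Proof.
  set (A := logderiv_coef n a).
  destruct (is_derive_PSeries_pmf_sum n (le_n n)) as [r [Hr [Hr1 Hd]]].
  assert (HA : forall z, Rabs z < r -> is_pseries A z (sum_lt n (fun i => G i z))).
  { intros z Hz. destruct (Hd z Hz) as [Hrad _]. apply is_pseries_R.
    apply is_series_ext with (fun k => sum_lt n (fun i => a i (S k) * z ^ k)).
    { intros k. unfold A, logderiv_coef. rewrite Rmult_comm, <- sum_lt_scal.
      apply sum_lt_ext. intros; ring. }
    apply (is_series_sum_lt n (fun i k => a i (S k) * z ^ k)). intros i Hi.
    apply is_pseries_R, PSeries_correct, CV_radius_inside, Hrad; auto. }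
  assert (HAr : forall z, Rabs z < r -> Rbar_lt (Rabs z) (CV_radius A)).
  { apply CV_radius_gt_ex_pseries_ball. intros z Hz. eexists. apply HA; auto. }
  assert (Hyr : forall z, Rabs z < r -> Rbar_lt (Rabs z) (CV_radius (Y n))).
  { intros z Hz. apply CV_radius_pmf_gt; [apply is_pmf_pmf_sum; auto | lra]. }
  intros. apply (PSeries_ext_recip (PS_derive (Y n)) (PS_mult A (Y n)) m).
  - rewrite CV_radius_derive. rewrite <- Rabs_R0. apply Hyr. rewrite Rabs_R0; auto.
  - assert (Hr2 : Rabs (r / 2) < r) by (rewrite Rabs_right; lra).
    assert (X := CV_radius_ge_ex_pseries _ _ (ex_pseries_mult A (Y n) (r / 2) (HAr _ Hr2) (Hyr _ Hr2))).
    rewrite Rabs_right in X by lra. destruct (CV_radius (PS_mult A (Y n))); simpl in *; auto. lra.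
  - exists (mkposreal r Hr). intros t Ht.
    change (Rabs (t - 0) < r) in Ht. rewrite Rminus_0_r in Ht.
    destruct (Hd t Ht) as [_ D]. rewrite PSeries_mult by auto.
    rewrite <- (is_derive_unique _ _ _ (is_derive_PSeries (Y n) t (Hyr t Ht))).
    rewrite (is_derive_unique _ _ _ D), (is_pseries_unique _ _ _ (HA t Ht)). ring.
Qed.

End LawOfSum.

Definition delay (k : nat) (u : nat -> R) (m : nat) : R :=
  if (k <=? m)%nat then u (m - k)%nat else 0.

Lemma is_series_delay u k l : is_series u l -> is_series (delay k u) l.
Proof.
  intros H. destruct k as [|k].
  - apply (is_series_ext u); [intros m; unfold delay; simpl; f_equal; lia | exact H].
  - apply (is_series_decr_n (delay (S k) u) (S k) l); [lia|].
    match goal with |- is_series _ ?x => replace x with l end.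
    + apply (is_series_ext u); [|exact H]. intros m. unfold delay.
      destruct (Nat.leb_spec (S k) (S k + m)); [f_equal; lia | lia].
    + change (@eq R l (l + - sum_n (delay (S k) u) (pred (S k)))).
      rewrite sum_n_sum_lt.
      replace (sum_lt (S (pred (S k))) (delay (S k) u)) with 0; [rewrite Ropp_0, Rplus_0_r; reflexivity|].
      rewrite <- (sum_lt_0 (S (pred (S k)))). apply sum_lt_ext.
      intros j Hj. unfold delay. destruct (Nat.leb_spec (S k) j); [lia | reflexivity].
Qed.

Lemma delay_nonneg k u m : (forall j, 0 <= u j) -> 0 <= delay k u m.
Proof. intros H. unfold delay. destruct (k <=? m)%nat; [apply H | lra]. Qed.

Lemma ex_series_pmf_mul_bounded y u G :
  is_pmf y -> (forall m, Rabs (u m) <= G) -> ex_series (fun m => y m * u m).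
Proof.
  intros [Yp Ys] H. apply ex_series_Rabs, (ex_series_Rabs_le _ (fun m => G * y m)).
  - intros m. rewrite Rabs_mult, Rabs_right by (apply Rle_ge; auto).
    specialize (H m). specialize (Yp m). nra.
  - exists (G * 1). apply (is_series_scal (V := R_NormedModule) G y 1 Ys).
Qed.

Lemma dTV_eq_expect_indicator u v : is_pmf u -> is_pmf v ->
  let h m := if Rle_dec (v m) (u m) then 1 else 0 in
  dTV u v = Series (fun m => u m * h m) - Series (fun m => h m * v m).
Proof.
  intros Hu Hv h.
  assert (Hh : forall m, Rabs (h m) <= 1).
  { intros m. unfold h. destruct (Rle_dec _ _); rewrite ?Rabs_R1, ?Rabs_R0; lra. }
  assert (Su := Series_correct _ (ex_series_pmf_mul_bounded u h 1 Hu Hh)).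
  assert (Sv := Series_correct _ (ex_series_pmf_mul_bounded v h 1 Hv Hh)).
  assert (TV : is_series (fun m => 2 * (u m * h m - v m * h m) - (u m - v m))
                 (2 * (Series (fun m => u m * h m) - Series (fun m => v m * h m)) - (1 - 1))).
  { apply (is_series_minus (V := R_NormedModule)).
    - apply (is_series_scal (V := R_NormedModule)), (is_series_minus (V := R_NormedModule)); auto.
    - apply (is_series_minus (V := R_NormedModule)); [apply Hu | apply Hv]. }
  unfold dTV. rewrite (is_series_unique (fun m => Rabs (u m - v m))
    (2 * (Series (fun m => u m * h m) - Series (fun m => v m * h m)) - (1 - 1))).
  - replace (Series (fun m => h m * v m)) with (Series (fun m => v m * h m))
      by (apply Series_ext; intros; ring).
    field.
  - eapply is_series_ext; [|exact TV]. intros m. unfold h.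
    destruct (Rle_dec (v m) (u m)); [rewrite Rabs_right | rewrite Rabs_left]; lra.
Qed.

Section SteinBound.
Variables (y A : nat -> R) (al p mu : R).
Hypothesis Hal : 0 < al.
Hypothesis Hp : 0 < p < 1.
Hypothesis Hy : is_pmf y.
Hypothesis Hrec : forall m, INR (S m) * y (S m) = sum_f_R0 (fun k => A k * y (m - k)%nat) m.
Hypothesis HA : is_series A mu.
Hypothesis Hmu : (1 - p) * al = p * mu.
Let b j := A (S j) - (1 - p) * A j.
Let B j := INR (S j) * Rabs (b j).
Hypothesis HB : ex_series B.
Let lam := nb_rate al p.

Lemma is_series_b : is_series b (p * mu - A O).
Proof.
  assert (H1 : is_series (fun j => A (S j)) (mu - A O)).
  { apply is_series_incr_1. match goal with |- is_series _ ?x => replace x with mu by ring_R end.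
    exact HA. }
  assert (H2 := is_series_scal (V := R_NormedModule) (1 - p) A mu HA).
  replace (p * mu - A O) with (minus (mu - A O) (scal (1 - p) mu)) by (ring_R || lra).
  exact (is_series_minus _ _ _ _ H1 H2).
Qed.

Lemma Rabs_b_le j : Rabs (b j) <= B j.
Proof.
  unfold B. assert (0 <= INR j) by apply pos_INR. assert (0 <= Rabs (b j)) by apply Rabs_pos.
  rewrite S_INR. nra.
Qed.

Lemma mul_pmf_eq m : INR m * y m = sum_lt m (fun k => A k * y (m - S k)%nat).
Proof.
  destruct m as [|m]; [simpl; ring|].
  rewrite Hrec, sum_f_R0_sum_lt. reflexivity.
Qed.

(* The adjoint of the Stein operator [g |-> lam m * g (S m) - m * g m] applied to y. *)
Lemma stein_adjoint_eq m : lam m * y m - INR (S m) * y (S m)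
  = (p * mu - A O) * y m - sum_lt m (fun j => b j * y (m - S j)%nat).
Proof.
  rewrite Hrec, sum_f_R0_sum_lt, sum_lt_Sl, Nat.sub_0_r.
  assert (E : sum_lt m (fun j => b j * y (m - S j)%nat) =
     sum_lt m (fun k => A (S k) * y (m - S k)%nat)
     - (1 - p) * sum_lt m (fun k => A k * y (m - S k)%nat)).
  { rewrite <- sum_lt_scal, <- sum_lt_minus. apply sum_lt_ext. intros; unfold b; ring. }
  rewrite E, <- mul_pmf_eq. unfold lam, nb_rate.
  replace ((1 - p) * (al + INR m) * y m) with ((1 - p) * al * y m + (1 - p) * (INR m * y m))
    by ring.
  rewrite Hmu. ring.
Qed.

Section TestFunction.
Variable h : nat -> R.
Hypothesis Hh : forall k, 0 <= h k <= 1.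
Let g := stein_sol al p h.

Lemma stein_sol_shift_le k t : Rabs (g (S k) - g (S k + t)%nat) <= INR t / (al * (1 - p)).
Proof.
  induction t as [|t IH].
  - rewrite Nat.add_0_r, Rminus_diag, Rabs_R0. simpl. unfold Rdiv. rewrite Rmult_0_l. lra.
  - replace (g (S k) - g (S k + S t)%nat)
      with ((g (S k) - g (S k + t)%nat) + - (g (S (S k + t)) - g (S k + t)%nat))
      by (rewrite Nat.add_succ_r; ring).
    eapply Rle_trans; [apply Rabs_triang|]. rewrite Rabs_Ropp.
    assert (X := stein_sol_increment_le al p Hal Hp h Hh (S k + t) ltac:(lia)).
    rewrite S_INR. unfold Rdiv in *. fold g in X. lra.
Qed.

Let Eg j := Series (fun k => y k * g (S j + k)%nat).

Lemma is_series_Eg j : is_series (fun k => y k * g (S j + k)%nat) (Eg j).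
Proof.
  apply Series_correct. destruct (stein_sol_bounded al p Hal Hp h Hh) as [G HG].
  apply ex_series_pmf_mul_bounded with G; auto.
Qed.

Lemma Rabs_Eg_diff_le j : Rabs (Eg O - Eg (S j)) <= INR (S j) / (al * (1 - p)).
Proof.
  destruct Hy as [Yp Ys].
  assert (HD : is_series (fun k => y k * (g (S O + k)%nat - g (S (S j) + k)%nat)) (Eg O - Eg (S j))).
  { eapply is_series_ext; [|exact (is_series_minus _ _ _ _ (is_series_Eg O) (is_series_Eg (S j)))].
    intros k. ring_R. }
  rewrite <- (is_series_unique _ _ HD).
  apply Rabs_Series_le with (fun k => y k * (INR (S j) / (al * (1 - p)))).
  - intros k. rewrite Rabs_mult, (Rabs_right (y k)) by (apply Rle_ge; auto).
    apply Rmult_le_compat_l; auto.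
    replace (S (S j) + k)%nat with (S k + S j)%nat by lia. apply (stein_sol_shift_le k (S j)).
  - apply (is_series_scal_r (INR (S j) / (al * (1 - p)))) in Ys.
    rewrite Rmult_1_l in Ys. exact Ys.
Qed.

(* The double series [sum_j sum_m w j m] computes the Stein expectation in two ways. *)
Let w j m := b j * ((y m - delay (S j) y m) * g (S m)).

Lemma is_series_w_row j : is_series (w j) (b j * (Eg O - Eg (S j))).
Proof.
  apply (is_series_scal (V := R_NormedModule) (b j)).
  assert (H2 : is_series (fun m => delay (S j) y m * g (S m)) (Eg (S j))).
  { apply (is_series_ext (delay (S j) (fun k => y k * g (S (S j) + k)%nat))).
    - intros m. unfold delay. destruct (Nat.leb_spec (S j) m); [|ring_R].
      replace (S (S j) + (m - S j))%nat with (S m) by lia. reflexivity.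
    - apply is_series_delay, is_series_Eg. }
  eapply is_series_ext; [|exact (is_series_minus _ _ _ _ (is_series_Eg O) H2)].
  intros m. ring_R.
Qed.

Lemma is_series_w_col m :
  is_series (fun j => w j m) ((lam m * y m - INR (S m) * y (S m)) * g (S m)).
Proof.
  rewrite stein_adjoint_eq.
  assert (C1 := is_series_scal_r (y m) b _ is_series_b).
  assert (C2 : is_series (fun j => b j * delay (S j) y m) (sum_lt m (fun j => b j * y (m - S j)%nat))).
  { rewrite (sum_lt_ext m _ (fun j => b j * delay (S j) y m)).
    - apply is_series_finite_support. intros j Hj. unfold delay.
      destruct (Nat.leb_spec (S j) m); [lia | ring].
    - intros j Hj. unfold delay. destruct (Nat.leb_spec (S j) m); [reflexivity | lia]. }
  eapply is_series_ext; [|exact (is_series_scal_r (g (S m)) _ _ (is_series_minus _ _ _ _ C1 C2))].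
  intros j. unfold w. ring_R.
Qed.

Lemma is_series_stein_lhs : exists L,
  is_series (fun m => (lam m * y m - INR (S m) * y (S m)) * g (S m)) L /\
  Rabs L <= Series B / (al * (1 - p)).
Proof.
  destruct (stein_sol_bounded al p Hal Hp h Hh) as [G HG]. fold g in HG.
  destruct Hy as [Yp Ys].
  assert (Hq : 0 < al * (1 - p)) by nra.
  assert (Wb : forall j m, Rabs (w j m) <= Rabs (b j) * G * (y m + delay (S j) y m)).
  { intros j m. unfold w. rewrite !Rabs_mult, Rmult_assoc.
    apply Rmult_le_compat_l; [apply Rabs_pos|]. rewrite Rmult_comm.
    assert (0 <= delay (S j) y m) by (apply delay_nonneg; auto). specialize (Yp m).
    apply Rmult_le_compat; try apply Rabs_pos; [apply HG|].
    unfold Rminus. eapply Rle_trans; [apply Rabs_triang|].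
    rewrite Rabs_Ropp, !Rabs_right; lra. }
  assert (Wbs : forall j, is_series (fun m => Rabs (b j) * G * (y m + delay (S j) y m))
                                   (Rabs (b j) * G * (1 + 1))).
  { intros j. apply (is_series_scal (V := R_NormedModule)), (is_series_plus y); auto.
    apply is_series_delay. exact Ys. }
  assert (Wex : forall j, ex_series (fun m => Rabs (w j m)))
    by (intros j; apply (ex_series_Rabs_le _ _ (Wb j)); eexists; apply Wbs).
  destruct (is_series_swap w (fun j => 2 * G * B j)) as [_ Fub]; auto.
  - intros j. apply Rle_trans with (Rabs (b j) * G * (1 + 1)).
    + apply (is_series_le (fun m => Rabs (w j m)) _ _ _ (Series_correct _ (Wex j)) (Wbs j)).
      intros; apply Wb.
    + assert (X := Rabs_b_le j). assert (0 <= G) by (eapply Rle_trans; [apply Rabs_pos | apply (HG O)]).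
      nra.
  - destruct HB as [lB HlB]. exists (2 * G * lB). apply (is_series_scal (V := R_NormedModule)), HlB.
  - exists (Series (fun j => Series (fun m => w j m))). split.
    + apply (is_series_ext (fun m => Series (fun j => w j m))); [|exact Fub].
      intros m. apply is_series_unique, is_series_w_col.
    + rewrite (Series_ext _ (fun j => b j * (Eg O - Eg (S j))))
        by (intros j; apply is_series_unique, is_series_w_row).
      apply Rabs_Series_le with (fun j => B j / (al * (1 - p))).
      * intros j. rewrite Rabs_mult.
        apply Rle_trans with (Rabs (b j) * (INR (S j) / (al * (1 - p)))).
        -- apply Rmult_le_compat_l; [apply Rabs_pos | apply Rabs_Eg_diff_le].
        -- right. unfold B. field. lra.
      * apply is_series_scal_r, Series_correct, HB.
Qed.

(* Summation by parts of the Stein equation against y. *)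
Lemma stein_lhs_eq (L : R) :
  is_series (fun m => (lam m * y m - INR (S m) * y (S m)) * g (S m)) L ->
  L = Series (fun m => y m * h m) - nb_expect al p h.
Proof.
  intros HL. destruct Hy as [Yp Ys].
  destruct (stein_sol_rate_bounded al p Hal Hp h Hh) as [K HK]. fold g lam in HK.
  set (ph := nb_expect al p h).
  assert (Hyh : is_series (fun m => y m * h m) (Series (fun m => y m * h m))).
  { apply Series_correct, ex_series_pmf_mul_bounded with 1; auto.
    intros m. destruct (Hh m). rewrite Rabs_right; lra. }
  assert (Part : forall N, sum_lt (S N) (fun m => y m * (h m - ph)) =
     sum_lt N (fun m => (lam m * y m - INR (S m) * y (S m)) * g (S m)) + lam N * y N * g (S N)).
  { induction N as [|N IH].
    - assert (E : lam O * g 1%nat - INR 0 * g O = h O - ph) by (apply stein_sol_eq; auto).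
      cbn [sum_lt]. rewrite <- E, INR_0. ring.
    - assert (E : lam (S N) * g (S (S N)) - INR (S N) * g (S N) = h (S N) - ph)
        by (apply stein_sol_eq; auto).
      cbn [sum_lt] in IH |- *. rewrite IH, <- E. ring. }
  assert (L1 : is_lim_seq (fun N => sum_lt (S N) (fun m => y m * (h m - ph)))
                 (Series (fun m => y m * h m) - ph)).
  { apply (is_lim_seq_incr_1 (fun N => sum_lt N (fun m => y m * (h m - ph)))).
    apply is_series_iff_sum_lt.
    assert (Z := is_series_minus _ _ _ _ Hyh (is_series_scal (V := R_NormedModule) ph y 1 Ys)).
    replace (Series (fun m => y m * h m) - ph) with
      (minus (Series (fun m => y m * h m)) (scal ph 1)) by ring_R.
    eapply is_series_ext; [|exact Z]. intros m. ring_R. }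
  assert (L2 : is_lim_seq (fun N => lam N * y N * g (S N)) 0).
  { apply is_lim_seq_abs_0, is_lim_seq_le_le with (fun _ => 0) (fun N => K * Rabs (y N)).
    - intros N. split; [apply Rabs_pos|].
      replace (lam N * y N * g (S N)) with (y N * (lam N * g (S N))) by ring.
      rewrite Rabs_mult, (Rmult_comm K). apply Rmult_le_compat_l; [apply Rabs_pos | apply HK].
    - apply is_lim_seq_const.
    - replace (Finite 0) with (Rbar_mult K 0) by (simpl; f_equal; ring).
      apply is_lim_seq_scal_l, (is_lim_seq_abs_0 y), ex_series_lim_0. eexists; eauto. }
  symmetry. apply (is_lim_seq_unique_R _ _ _ L1).
  replace L with (L + 0) by ring.
  apply (is_lim_seq_ext _ _ _ (fun N => eq_sym (Part N))), is_lim_seq_plus'; auto.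
  apply is_series_iff_sum_lt. exact HL.
Qed.

Lemma Rabs_expect_diff_le :
  Rabs (Series (fun m => y m * h m) - nb_expect al p h) <= Series B / (al * (1 - p)).
Proof.
  destruct is_series_stein_lhs as [L [HL HLb]]. rewrite <- (stein_lhs_eq L HL). exact HLb.
Qed.

End TestFunction.

Lemma dTV_nb_le : dTV y (nb_pmf al p) <= / (al * (1 - p)) * Series B.
Proof.
  rewrite (dTV_eq_expect_indicator y (nb_pmf al p) Hy).
  - eapply Rle_trans; [apply Rle_abs|]. rewrite Rmult_comm.
    apply Rabs_expect_diff_le. intros m. destruct (Rle_dec _ _); lra.
  - split; [intros; left; apply nb_pmf_pos; auto | apply is_series_nb_pmf; auto].
Qed.

End SteinBound.

Lemma Series_weighted_Rabs_sum_lt_le n (c : nat -> nat -> R) (wgt : nat -> R) :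
  (forall j, 0 <= wgt j) ->
  (forall i, (i < n)%nat -> ex_series (fun j => wgt j * Rabs (c i j))) ->
  ex_series (fun j => wgt j * Rabs (sum_lt n (fun i => c i j))) /\
  Series (fun j => wgt j * Rabs (sum_lt n (fun i => c i j)))
    <= sum_lt n (fun i => Series (fun j => wgt j * Rabs (c i j))).
Proof.
  intros Hw Hc.
  assert (Hs := is_series_sum_lt n (fun i j => wgt j * Rabs (c i j)) _
                  (fun i Hi => Series_correct _ (Hc i Hi))).
  assert (Hle : forall j, 0 <= wgt j * Rabs (sum_lt n (fun i => c i j))
                          <= sum_lt n (fun i => wgt j * Rabs (c i j))).
  { intros j. split; [apply Rmult_le_pos; [auto | apply Rabs_pos]|].
    rewrite sum_lt_scal. apply Rmult_le_compat_l; [auto | apply Rabs_sum_lt_le]. }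
  assert (Hex : ex_series (fun j => wgt j * Rabs (sum_lt n (fun i => c i j)))).
  { apply ex_series_Rabs, (ex_series_Rabs_le _ (fun j => sum_lt n (fun i => wgt j * Rabs (c i j))));
      [|eexists; eauto].
    intros j. rewrite Rabs_right by (apply Rle_ge, Hle). apply Hle. }
  split; [exact Hex|].
  rewrite <- (is_series_unique _ _ Hs). apply Series_le; [exact Hle | eexists; eauto].
Qed.

Theorem theorem3p1 (n : nat) (f : nat -> nat -> R) (a : nat -> nat -> R)
  (alpha p : R) :
  (forall i, (i < n)%nat -> is_pmf (f i)) ->
  (* G_{X_i}(z) := M'(z)/M(z) = sum_{m>=0} a_{i,m+1} z^m  near 0 *)
  (forall i, (i < n)%nat ->
     exists r, 0 < r /\
       forall z, Rabs z < r ->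
         pgf (f i) z <> 0 /\
         ex_pseries (fun m => a i (S m)) z /\
         Derive (pgf (f i)) z / pgf (f i) z = PSeries (fun m => a i (S m)) z) ->
  (* mu = sum_i sum_m a_{i,m+1} is well defined *)
  (forall i, (i < n)%nat -> ex_series (fun m => a i (S m))) ->
  0 < alpha -> 0 < p < 1 ->
  alpha * (1 - p) / p = sum_lt n (fun i => Series (fun m => a i (S m))) ->
  (* the right-hand side is finite (otherwise the bound is trivial) *)
  (forall i, (i < n)%nat ->
     ex_series (fun k => INR (S k) * Rabs (a i (S (S k)) - (1 - p) * a i (S k)))) ->
  dTV (pmf_sum f n) (nb_pmf alpha p)
    <= / (alpha * (1 - p)) *
       sum_lt n (fun i =>
         Series (fun k => INR (S k) * Rabs (a i (S (S k)) - (1 - p) * a i (S k)))).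
Proof.
  intros Hpmf HG Hex Hal Hp Hmu HB.
  set (A := logderiv_coef n a).
  assert (Hb : forall j, A (S j) - (1 - p) * A j
                         = sum_lt n (fun i => a i (S (S j)) - (1 - p) * a i (S j))).
  { intros j. unfold A, logderiv_coef. rewrite sum_lt_minus, sum_lt_scal. reflexivity. }
  destruct (Series_weighted_Rabs_sum_lt_le n (fun i j => a i (S (S j)) - (1 - p) * a i (S j))
              (fun j => INR (S j))) as [HBex HBle]; auto using pos_INR.
  set (B := fun j => INR (S j) * Rabs (A (S j) - (1 - p) * A j)).
  assert (EB : forall j, B j = INR (S j)
                 * Rabs (sum_lt n (fun i => a i (S (S j)) - (1 - p) * a i (S j))))
    by (intros j; unfold B; rewrite Hb; reflexivity).
  rewrite <- (Series_ext B _ EB) in HBle.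
  apply (ex_series_ext _ B (fun j => eq_sym (EB j))) in HBex.
  eapply Rle_trans.
  - apply (dTV_nb_le (pmf_sum f n) A alpha p (sum_lt n (fun i => Series (fun m => a i (S m)))));
      auto.
    + exact (is_pmf_pmf_sum n f Hpmf n (le_n n)).
    + exact (pmf_sum_S_eq n f a Hpmf HG).
    + apply (is_series_sum_lt n (fun i m => a i (S m))). intros; apply Series_correct; auto.
    + rewrite <- Hmu. field. lra.
  - apply Rmult_le_compat_l; [|exact HBle].
    left. apply Rinv_0_lt_compat. nra.
Qed.
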